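(* Let $q$ be a prime power and $T\in\mathbb F_q[X,Y,Z]$ a reduced polynomial satisfying Property (a): $T(a,0,z)=T(0,b,z)=z$ for all $a,b,z\in\mathbb F_q$, and at least one of the following: (c) for all $a,b,c,d\in\mathbb F_q$ with $a\neq c$ there is a unique $x\in\mathbb F_q$ with $T(x,a,b)=T(x,c,d)$; (e) for all $a,b,c,d\in\mathbb F_q$ with $a\neq c$ there is a unique pair $(y,z)\in\mathbb F_q^2$ with $T(a,y,z)=b$ and $T(c,y,z)=d$. Then for every $z\in\mathbb F_q$ the polynomial $T(X,Y,z)-z\in\mathbb F_q[X,Y]$ is a $\kappa$-polynomial over $\mathbb F_q$.
   Context: A polynomial is reduced if its degree in each variable is less than $q$. A polynomial $f\in\mathbb F_q[X_1,\dots,X_n]$ is a $\kappa$-polynomial over $\mathbb F_q$ if the number $k_a=\#\{\mathbf x\in\mathbb F_q^n: f(\mathbf x)=a\}$ is the same for all $a\in\mathbb F_q^*=\mathbb F_q\setminus\{0\}$. *)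

From HB Require Import structures.
From mathcomp Require Import all_boot all_order all_algebra all_field.
From mathcomp Require Import mpoly.
Set Implicit Arguments. Unset Strict Implicit. Unset Printing Implicit Defensive.
Import Order.TTheory GRing.Theory.
Local Open Scope ring_scope.

Definition reduced (F : finFieldType) (n : nat) (p : {mpoly F[n]}) : Prop :=
  forall m, m \in msupp p -> forall i : 'I_n, (m i < #|F|)%N.

Definition kappa_poly (F : finFieldType) (n : nat) (f : {mpoly F[n]}) : Prop :=
  forall a b : F, a != 0 -> b != 0 ->
    #|[set x : {ffun 'I_n -> F} | f.@[x] == a]| =
    #|[set x : {ffun 'I_n -> F} | f.@[x] == b]|.

Definition eval3 (F : finFieldType) (T : {mpoly F[3]}) (x y z : F) : F :=
  T.@[tnth [tuple x; y; z]].

Definition slice_minus (F : finFieldType) (T : {mpoly F[3]}) (z : F) : {mpoly F[2]} :=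
  T \mPo [tuple 'X_0; 'X_1; z%:MP] - z%:MP.

(* On the axes T(x, y, z) - z vanishes, by (a).  Off the axes, (c) applied to
   the lines y = v and y = 0 (resp. (e) applied to the lines x = 0 and x = u)
   gives, for each nonzero a and each v != 0 (resp. u != 0), exactly one point
   of the level set T(x, y, z) - z = a on that line.  Hence every nonzero level
   set of T(X, Y, z) - z has exactly q - 1 points. *)

From HB Require Import structures.
From mathcomp Require Import all_boot all_order all_algebra all_field.
From mathcomp Require Import mpoly.
Import GRing.Theory.
Local Open Scope ring_scope.

Lemma card_ffun2 (T : finType) (P : T -> T -> bool) :
  #|[set x : {ffun 'I_2 -> T} | P (x ord0) (x ord_max)]| =
  (\sum_u #|[set v | P u v]|)%N.
Proof.
pose ffun_of_pair (p : T * T) : {ffun 'I_2 -> T} :=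
  [ffun i => if i == ord0 then p.1 else p.2].
have ffun_of_pairK : cancel ffun_of_pair (fun x => (x ord0, x ord_max)).
  by case=> u v; rewrite !ffunE.
have pair_of_ffunK :
    cancel (fun x : {ffun 'I_2 -> T} => (x ord0, x ord_max)) ffun_of_pair.
  move=> x; apply/ffunP => -[[|[|//]] i2];
  by rewrite ffunE /=; congr (x _); apply: val_inj.
rewrite -sum1_card (reindex ffun_of_pair) /=; last first.
  by exists (fun x => (x ord0, x ord_max)) => ? _.
under [RHS]eq_bigr do rewrite -sum1_card.
by rewrite pair_big_dep; apply: eq_bigl => -[u v]; rewrite !inE !ffunE.
Qed.

Lemma exchange_sum_card (T : finType) (P : T -> T -> bool) :
  (\sum_u #|[set v | P u v]|)%N = (\sum_v #|[set u | P u v]|)%N.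
Proof.
under eq_bigr do rewrite -sum1_card big_mkcond.
under [RHS]eq_bigr do rewrite -sum1_card big_mkcond.
rewrite exchange_big; apply: eq_bigr => v _.
by apply: eq_bigr => u _; rewrite !inE.
Qed.

Lemma sum_card_punctured (T : finType) (A : T -> {set T}) (v0 : T) :
  A v0 = set0 -> (forall v, v != v0 -> exists! u, u \in A v) ->
  (\sum_v #|A v|)%N = #|T|.-1.
Proof.
move=> A_v0 A_uniq; rewrite -(cardsC1 v0) -[RHS]sum1_card [RHS]big_mkcond /=.
apply: eq_bigr => v _; rewrite !inE.
have [-> | /A_uniq [u [Au u_uniq]]] := eqVneq v v0.
  by rewrite A_v0 cards0.
apply: eq_card1 => w; apply/idP/eqP => [/u_uniq <- // | ->]; exact: Au.
Qed.

Lemma meval_slice_minus (F : finFieldType) (T : {mpoly F[3]}) (z : F)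
    (x : {ffun 'I_2 -> F}) :
  (slice_minus T z).@[x] = eval3 T (x ord0) (x ord_max) z - z.
Proof.
rewrite /slice_minus mevalB mevalC comp_mpoly_meval /eval3; congr (_ - _).
apply: meval_eq => -[[|[|[|//]]] i3];
  rewrite !(tnth_nth 0) /= ?mevalXU ?mevalC //; congr (x _); exact: val_inj.
Qed.

Section LevelSetsOfSlices.

Context {F : finFieldType} {T : {mpoly F[3]}}.
Hypothesis T_axes : forall a b z : F, eval3 T a 0 z = z /\ eval3 T 0 b z = z.
Context {z a : F}.
Hypothesis a_neq0 : a != 0.

Let level u v := eval3 T u v z - z == a.

Lemma card_level_slice_minus :
  #|[set x : {ffun 'I_2 -> F} | (slice_minus T z).@[x] == a]| =
  (\sum_u #|[set v | level u v]|)%N.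
Proof.
by rewrite -card_ffun2; apply: eq_card => x; rewrite !inE meval_slice_minus.
Qed.

Lemma level_x_axisF u : level u 0 = false.
Proof.
by rewrite /level (proj1 (T_axes u 0 z)) subrr eq_sym (negbTE a_neq0).
Qed.

Lemma level_y_axisF v : level 0 v = false.
Proof.
by rewrite /level (proj2 (T_axes 0 v z)) subrr eq_sym (negbTE a_neq0).
Qed.

Lemma card_level_slice_minus_c :
  (forall a b c d : F, a != c ->
     exists! x : F, eval3 T x a b = eval3 T x c d) ->
  #|[set x : {ffun 'I_2 -> F} | (slice_minus T z).@[x] == a]| = #|F|.-1.
Proof.
move=> Tc; rewrite card_level_slice_minus exchange_sum_card.
rewrite (@sum_card_punctured _ _ 0) //.
- by apply/setP => u; rewrite !inE level_x_axisF.
move=> v v_neq0; have [u [Tu u_uniq]] := Tc v z 0 (a + z) v_neq0.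
have T_a_0 w : eval3 T w 0 (a + z) = a + z by exact: (proj1 (T_axes w 0 _)).
exists u; split=> [|w]; first by rewrite inE /level Tu T_a_0 addrK.
by rewrite inE => /eqP Tw; apply: u_uniq; rewrite T_a_0 -Tw subrK.
Qed.

Lemma card_level_slice_minus_e :
  (forall a b c d : F, a != c ->
     exists! yz : F * F, eval3 T a yz.1 yz.2 = b /\ eval3 T c yz.1 yz.2 = d) ->
  #|[set x : {ffun 'I_2 -> F} | (slice_minus T z).@[x] == a]| = #|F|.-1.
Proof.
move=> Te; rewrite card_level_slice_minus (@sum_card_punctured _ _ 0) //.
- by apply/setP => v; rewrite !inE level_y_axisF.
move=> u; rewrite eq_sym => u_neq0.
have [[y w] [[/= T0yw Tuyw] yw_uniq]] := Te 0 z u (a + z) u_neq0.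
rewrite (proj2 (T_axes 0 y w)) in T0yw; subst w.
exists y; split=> [|v]; first by rewrite inE /level Tuyw addrK.
rewrite inE => /eqP Tv.
have Tuvz : eval3 T u v z = a + z by rewrite -Tv subrK.
by case: (yw_uniq (v, z) (conj (proj2 (T_axes 0 v z)) Tuvz)).
Qed.

End LevelSetsOfSlices.

Theorem theorem4p4 (F : finFieldType) (T : {mpoly F[3]}) :
  reduced T ->
  (forall a b z : F, eval3 T a 0 z = z /\ eval3 T 0 b z = z) ->
  ((forall a b c d : F, a != c ->
      exists! x : F, eval3 T x a b = eval3 T x c d)
   \/
   (forall a b c d : F, a != c ->
      exists! yz : F * F, eval3 T a yz.1 yz.2 = b /\ eval3 T c yz.1 yz.2 = d)) ->
  forall z : F, kappa_poly (slice_minus T z).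
Proof.
move=> _ T_axes T_c_or_e z a b a_neq0 b_neq0.
case: T_c_or_e => [T_c | T_e].
- by rewrite (card_level_slice_minus_c T_axes a_neq0 T_c)
             (card_level_slice_minus_c T_axes b_neq0 T_c).
- by rewrite (card_level_slice_minus_e T_axes a_neq0 T_e)
             (card_level_slice_minus_e T_axes b_neq0 T_e).
Qed.
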